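(* For every $N\ge 1$ and every integer $r\ge 0$, $$\Pr[\mathcal{R}_2(N)=r]=\frac{1}{(N-1)!}\left[{N-1\atop r}\right],$$ where $\left[{m\atop r}\right]$ denotes the unsigned Stirling number of the first kind (the number of permutations of $\{1,\dots,m\}$ with exactly $r$ cycles, with $\left[{0\atop 0}\right]=1$).
   Context: A random recursive hypergraph (RRH) is the random hypergraph process defined as follows. At size $N=1$ it has vertex set $\{v_1\}$ and edge set $\{\{v_1\}\}$. Given the hypergraph of size $N$ (vertices $v_1,\dots,v_N$, exactly $N$ edges), one chooses an existing edge $e$ uniformly at random, independently of the past, and adds a new vertex $v_{N+1}$ together with the new edge $e\cup\{v_{N+1}\}$. The rank of a vertex $v$ is $\min\{|e| : v\in e\}$. $\mathcal{R}_k(N)$ denotes the number of vertices of rank $k$ in the RRH of size $N$ (equivalently, the number of edges of size $k$). *)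

From mathcomp Require Import all_boot all_order all_algebra all_fingroup.
Set Implicit Arguments. Unset Strict Implicit. Unset Printing Implicit Defensive.

(* Vertices are labelled 0, ..., N-1 (v_{i+1} is labelled i); a hypergraph of
   size N is the list of its edges e_1, ..., e_N (edge e_{i+1} at position i),
   each edge being the list of the labels of its vertices.
   [c j] (for j < i) is the 0-based index of the edge chosen when going from
   size j+1 to size j+2; it must satisfy c j <= j. *)
Fixpoint rrh (n : nat) (c : nat -> nat) : seq (seq nat) :=
  match n with
  | 0 => [:: [:: 0]]
  | n'.+1 => let E := rrh n' c in rcons E (rcons (nth [::] E (c n')) n)
  end.
(* rrh n c is the hypergraph of size n.+1 *)

(* rank of vertex v: min size of an edge containing v (every vertex lies in
   some edge; the default [(size E).+1] is never attained). *)
Definition vrank (E : seq (seq nat)) (v : nat) : nat :=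
  foldr minn (size E).+1 [seq size e | e <- E & v \in e].

Definition Rk (k : nat) (E : seq (seq nat)) : nat :=
  count (fun v => vrank E v == k) (iota 0 (size E)).

Definition choice_seq (m : nat) (c : {ffun 'I_m -> nat}) : nat -> nat :=
  fun i => match insub i with Some j => c j | None => 0 end.

Definition valid_choice (m : nat) (c : {ffun 'I_m -> 'I_m.+1}) : bool :=
  [forall i : 'I_m, (c i <= i)%N].

Definition rrh_of (N : nat) (c : {ffun 'I_N.-1 -> 'I_N.-1.+1}) :=
  rrh N.-1 (choice_seq [ffun i => nat_of_ord (c i)]).

(* Pr[R_k(N) = r]: each valid choice vector c has probability
   prod_{i < N-1} 1/(i+1) (independent uniform choices). *)
Definition prob_Rk (k N r : nat) : rat :=
  (\sum_(c : {ffun 'I_N.-1 -> 'I_N.-1.+1} | valid_choice c && (Rk k (rrh_of c) == r))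
     \prod_(i < N.-1) (i.+1%:R)^-1)%R.

Definition stirling1 (m r : nat) : nat := #|[set s : 'S_m | #|porbits s| == r]|.

From mathcomp Require Import all_boot all_order all_algebra all_fingroup zify.
Set Implicit Arguments. Unset Strict Implicit. Unset Printing Implicit Defensive.
Import GRing.Theory.

(* The vertex [v_(j+1)] has rank [|e_(j+1)|], since every other edge containing
   it grew out of [e_(j+1)]; so [R_2(N)] counts the steps [j] at which the
   singleton edge [e_1] was chosen.  Encoding the choice [c_j] in [{0,...,j}] by
   the transposition [(j, c_j - 1)], or the identity when [c_j = 0], and
   multiplying these in order is a bijection from choice vectors onto the
   permutations of [N-1] points.  As [j] is still a fixed point when its
   transposition is applied, every nonzero choice merges two cycles, so the
   number of cycles equals the number of zero choices. *)

Lemma foldr_minn_eq (L : seq nat) d x :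
  x \in L -> x <= d -> {in L, forall y, x <= y} -> foldr minn d L = x.
Proof.
move=> xL le_xd le_xL; apply/eqP; rewrite eqn_leq; apply/andP; split.
  elim: L xL {le_xL} => // y L IH; rewrite inE /= geq_min.
  by case/orP=> [/eqP <-|/IH ->]; rewrite ?leqnn ?orbT.
elim: L le_xL {xL} => //= y L IH le_xL; rewrite leq_min le_xL ?mem_head //=.
by apply: IH => z zL; apply: le_xL; rewrite inE zL orbT.
Qed.

Section RandomRecursiveHypergraph.
Variable c : nat -> nat.
Hypothesis c_le : forall j, c j <= j.

Lemma size_rrh n : size (rrh n c) = n.+1.
Proof. by elim: n => //= n IH; rewrite size_rcons IH. Qed.

Definition rrh_edge i := nth [::] (rrh i c) i.

Lemma nth_rrh n i : i <= n -> nth [::] (rrh n c) i = rrh_edge i.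
Proof.
elim: n => [|n IH]; first by rewrite leqn0 => /eqP ->.
rewrite leq_eqVlt => /orP [/eqP -> //|lt_in].
by rewrite /= nth_rcons size_rrh lt_in IH.
Qed.

Lemma rrh_edgeS i : rrh_edge i.+1 = rcons (rrh_edge (c i)) i.+1.
Proof. by rewrite /rrh_edge /= nth_rcons size_rrh ltnn eqxx nth_rrh. Qed.

Lemma mem_rrh_edge i : i \in rrh_edge i.
Proof. by case: i => [|i]; rewrite ?rrh_edgeS ?mem_rcons inE eqxx. Qed.

Lemma size_rrh_edge_le i : size (rrh_edge i) <= i.+1.
Proof.
elim/ltn_ind: i => -[_|i IH] //; rewrite rrh_edgeS size_rcons ltnS.
by rewrite (leq_trans (IH _ (c_le i))) // ltnS.
Qed.

Lemma size_rrh_edge_mem i v : v \in rrh_edge i -> size (rrh_edge v) <= size (rrh_edge i).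
Proof.
elim/ltn_ind: i v => -[|i] IH v; first by rewrite inE => /eqP ->.
rewrite rrh_edgeS mem_rcons inE => /orP [/eqP ->|/IH le_v]; first by rewrite -rrh_edgeS.
by rewrite size_rcons (leq_trans (le_v (c_le i))).
Qed.

Lemma vrank_rrh n v : v <= n -> vrank (rrh n c) v = size (rrh_edge v).
Proof.
move=> le_vn; rewrite /vrank size_rrh; apply: foldr_minn_eq.
- apply/mapP; exists (rrh_edge v) => //; rewrite mem_filter mem_rrh_edge /=.
  by rewrite -(nth_rrh le_vn) mem_nth // size_rrh ltnS.
- by rewrite ltnW // ltnS (leq_trans (size_rrh_edge_le v)).
move=> y /mapP [x]; rewrite mem_filter => /andP [vx /(nthP [::]) [i]].
rewrite size_rrh ltnS => le_in; rewrite nth_rrh // => def_x ->.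
by rewrite -def_x in vx *; exact: size_rrh_edge_mem.
Qed.

Lemma size_rrh_edge_eq1 i : (size (rrh_edge i) == 1) = (i == 0).
Proof.
case: i => [//|i]; rewrite rrh_edgeS size_rcons eqSS.
by case: (rrh_edge (c i)) (mem_rrh_edge (c i)).
Qed.

Lemma Rk2_rrh n : Rk 2 (rrh n c) = count (fun j => c j == 0) (iota 0 n).
Proof.
rewrite /Rk size_rrh (@eq_in_count _ _ (fun v => size (rrh_edge v) == 2)); last first.
  by move=> v; rewrite mem_iota ltnS => /andP [_ le_vn]; rewrite vrank_rrh.
rewrite /= -[1]addn0 iotaDl count_map.
by apply: eq_count => j /=; rewrite add1n rrh_edgeS size_rcons eqSS size_rrh_edge_eq1.
Qed.

End RandomRecursiveHypergraph.

Lemma porbit_fix (T : finType) (s : {perm T}) x : s x = x -> porbit s x = [set x].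
Proof.
move=> sx; apply/setP => y; rewrite inE; apply/porbitP/eqP => [[n ->]|->].
  exact: permX_fix.
by exists 0; rewrite expg0 perm1.
Qed.

Lemma card_porbits1 (T : finType) : #|porbits (1 : {perm T})| = #|T|.
Proof.
rewrite /porbits (eq_imset (g := set1)) => [|x]; last by rewrite porbit_fix ?perm1.
by rewrite card_imset //; exact: set1_inj.
Qed.

Definition choice_fun m (c : {ffun 'I_m -> 'I_m.+1}) : nat -> nat :=
  choice_seq [ffun i => nat_of_ord (c i)].

Lemma choice_funE m (c : {ffun 'I_m -> 'I_m.+1}) (i : 'I_m) : choice_fun c i = c i.
Proof. by rewrite /choice_fun /choice_seq valK ffunE. Qed.

Lemma choice_fun_le m (c : {ffun 'I_m -> 'I_m.+1}) :
  valid_choice c -> forall j, choice_fun c j <= j.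
Proof.
move=> /forallP c_le j; rewrite /choice_fun /choice_seq.
by case: insubP => [i _ <-|] //; rewrite ffunE.
Qed.

Section ChoicePermutation.
Variable m : nat.
Implicit Types c : {ffun 'I_m -> 'I_m.+1}.

Definition choice_partner c (i : 'I_m) : 'I_m :=
  if c i == 0 :> nat then i else insubd i (c i).-1.

Fixpoint choice_perm c k : {perm 'I_m} :=
  if k is k'.+1 then
    if insub k' is Some i then (tperm i (choice_partner c i) * choice_perm c k')%g
    else choice_perm c k'
  else 1.

Lemma choice_permS c k (lt_km : k < m) :
  choice_perm c k.+1 =
    (tperm (Ordinal lt_km) (choice_partner c (Ordinal lt_km)) * choice_perm c k)%g.
Proof. by rewrite /= insubT. Qed.

Section ValidChoice.
Variable c : {ffun 'I_m -> 'I_m.+1}.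
Hypothesis c_le : forall i : 'I_m, c i <= i.

Lemma choice_partner_le i : choice_partner c i <= i.
Proof.
rewrite /choice_partner; case: eqP => // _; rewrite /insubd.
by case: insubP => [j _ ->|] //=; rewrite (leq_trans (leq_pred _)).
Qed.

Lemma val_choice_partner i : c i != 0 :> nat -> val (choice_partner c i) = (c i).-1.
Proof.
rewrite /choice_partner => /negbTE ->; rewrite /insubd insubT //=.
by rewrite (leq_ltn_trans (leq_pred _)) // (leq_ltn_trans (c_le i)).
Qed.

Lemma choice_partner_eq i : (choice_partner c i == i) = (c i == 0 :> nat).
Proof.
have [ci0|ci0] := eqVneq (c i : nat) 0; first by rewrite /choice_partner ci0 !eqxx.
rewrite -val_eqE val_choice_partner // ltn_eqF; first by apply/esym/negbTE.
by rewrite (leq_trans _ (c_le i)) // ltn_predL lt0n.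
Qed.

Lemma choice_perm_fix k (x : 'I_m) : k <= x -> choice_perm c k x = x.
Proof.
elim: k => [|k IH] le_kx; first by rewrite perm1.
have lt_km : k < m := ltn_trans le_kx (ltn_ord x).
have lt_partner : choice_partner c (Ordinal lt_km) < x.
  exact: leq_ltn_trans (choice_partner_le (Ordinal lt_km)) le_kx.
rewrite choice_permS permM tpermD ?IH ?(ltnW le_kx) // -val_eqE ltn_eqF //.
Qed.

Lemma card_porbits_choice_perm k : k <= m ->
  #|porbits (choice_perm c k)| + k = m + count (fun j => choice_fun c j == 0) (iota 0 k).
Proof.
elim: k => [|k IH] le_km; first by rewrite !addn0 card_porbits1 card_ord.
have lt_km : k < m := le_km.
have c_k : choice_fun c k = c (Ordinal lt_km) := choice_funE c (Ordinal lt_km).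
set i := Ordinal lt_km in c_k *.
have := porbits_mul_tperm (choice_perm c k) i (choice_partner c i).
rewrite porbit_sym porbit_fix ?choice_perm_fix // inE [i == _]eq_sym choice_partner_eq.
rewrite choice_permS -/i -[k.+1]addn1 iotaD count_cat /= c_k.
have := IH (ltnW le_km).
move: #|porbits (choice_perm c k)| #|porbits (_ * _)| (count _ _) => A B C.
by case: (c i == 0 :> nat); rewrite /= -muln2; lia.
Qed.

End ValidChoice.

Lemma choice_perm_partner_inj c c' k :
  (forall i : 'I_m, c i <= i) -> (forall i : 'I_m, c' i <= i) ->
  k <= m -> choice_perm c k = choice_perm c' k ->
  forall i : 'I_m, i < k -> choice_partner c i = choice_partner c' i.
Proof.
move=> c_le c'_le; elim: k => [//|k IH] le_km eq_perm i.
have lt_km : k < m := le_km; set j := Ordinal lt_km.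
have eq_j : choice_partner c j = choice_partner c' j.
  apply: (@perm_inj _ (choice_perm c' k.+1)); rewrite -{1}eq_perm !choice_permS -/j.
  by rewrite !permM !tpermR !choice_perm_fix.
have /mulgI eq_perm_k : (tperm j (choice_partner c' j) * choice_perm c k =
    tperm j (choice_partner c' j) * choice_perm c' k)%g.
  by rewrite -{1}eq_j -!choice_permS.
rewrite ltnS leq_eqVlt => /orP [/eqP eq_ik|]; last exact: IH (ltnW le_km) eq_perm_k i.
by have -> : i = j by apply: val_inj.
Qed.

Lemma choice_partner_inj c c' :
  (forall i : 'I_m, c i <= i) -> (forall i : 'I_m, c' i <= i) ->
  (forall i, choice_partner c i = choice_partner c' i) -> c = c'.
Proof.
move=> c_le c'_le eq_partner; apply/ffunP => i; apply: val_inj => /=.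
have zero_eq : (c i == 0 :> nat) = (c' i == 0 :> nat).
  by rewrite -choice_partner_eq // eq_partner choice_partner_eq.
have [ci0|ci0] := eqVneq (c i : nat) 0.
  by move: zero_eq; rewrite ci0 eqxx => /esym /eqP.
have c'i0 : c' i != 0 :> nat by rewrite -zero_eq.
have := val_choice_partner c_le ci0; rewrite eq_partner val_choice_partner //.
by move: ci0 c'i0; case: (c i : nat) => // a; case: (c' i : nat) => // b _ _ /= ->.
Qed.

End ChoicePermutation.

Lemma card_ord_le n j : j < n -> #|[pred x : 'I_n | x <= j]| = j.+1.
Proof.
move=> lt_jn; rewrite -sum1_card -[RHS]card_ord -sum1_card.
by rewrite (big_ord_widen _ (fun=> 1) lt_jn); apply: eq_bigl.
Qed.

Lemma prod_ord_succ m : \prod_(i < m) i.+1 = m`!.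
Proof. by rewrite fact_prod big_add1 big_mkord. Qed.

Lemma card_valid_choice m : #|[set c : {ffun 'I_m -> 'I_m.+1} | valid_choice c]| = m`!.
Proof.
rewrite (eq_card (B := family (fun i : 'I_m => [pred x : 'I_m.+1 | x <= i]))); last first.
  by move=> c; rewrite inE; apply/forallP/familyP.
rewrite card_family foldrE big_image -prod_ord_succ; apply: eq_bigr => i _.
exact: card_ord_le (leqW (ltn_ord i)).
Qed.

Lemma card_preimset_in (aT rT : finType) (A : {set aT}) (f : aT -> rT) (B : {set rT}) :
  {in A &, injective f} -> f @: A = [set: rT] -> #|[set x in A | f x \in B]| = #|B|.
Proof.
move=> f_inj f_onto; rewrite -(card_in_imset (f := f)) => [|x y]; last first.
  by rewrite !inE => /andP [xA _] /andP [yA _]; exact: f_inj.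
apply: eq_card => y; apply/imsetP/idP => [[x]|yB].
  by rewrite inE => /andP [_ fxB] ->.
have : y \in f @: A by rewrite f_onto inE.
by case/imsetP => x xA def_y; exists x; rewrite // inE xA -def_y.
Qed.

Lemma Rk2_rrh_choice m (c : {ffun 'I_m -> 'I_m.+1}) :
  valid_choice c -> Rk 2 (rrh m (choice_fun c)) = #|porbits (choice_perm c m)|.
Proof.
move=> c_valid; have /forallP c_le := c_valid.
rewrite Rk2_rrh; last exact: choice_fun_le.
by apply/eqP; rewrite -(eqn_add2r m) card_porbits_choice_perm // addnC.
Qed.

Lemma card_choice_Rk2 m r :
  #|[pred c : {ffun 'I_m -> 'I_m.+1} |
     valid_choice c && (Rk 2 (rrh m (choice_fun c)) == r)]| = stirling1 m r.
Proof.
pose phi (c : {ffun 'I_m -> 'I_m.+1}) := choice_perm c m.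
have phi_inj : {in [set c | valid_choice c] &, injective phi}.
  move=> c c'; rewrite !inE => /forallP c_le /forallP c'_le eq_phi.
  apply: (choice_partner_inj c_le c'_le) => i.
  exact: choice_perm_partner_inj c_le c'_le (leqnn m) eq_phi i (ltn_ord i).
have phi_onto : phi @: [set c | valid_choice c] = [set: {perm 'I_m}].
  apply/eqP; rewrite eqEcard subsetT cardsT card_Sn /=.
  by rewrite (card_in_imset phi_inj) card_valid_choice.
rewrite /stirling1 -(card_preimset_in _ phi_inj phi_onto); apply: eq_card => c.
rewrite !inE; case c_valid: (valid_choice c) => //=.
by rewrite Rk2_rrh_choice.
Qed.

Theorem mainTheorem7 (N r : nat) : (1 <= N)%N ->
  prob_Rk 2 N r = ((N.-1)`!%:R^-1 * (stirling1 N.-1 r)%:R)%R :> rat.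
Proof.
move=> _; rewrite /prob_Rk /rrh_of; move: N.-1 => m.
by rewrite prodfV -natr_prod prod_ord_succ sumr_const card_choice_Rk2 mulr_natr.
Qed.
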